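(* Let $$\Sigma_1=\begin{pmatrix}-1&-1&1&1\\1&1&1&1\\1&1&1&1\\1&1&1&1\end{pmatrix},\quad \Sigma_2=\begin{pmatrix}-1&-1&1&1\\1&-1&-1&1\\1&1&1&1\\1&1&1&1\end{pmatrix},\quad \Sigma_3=\begin{pmatrix}-1&-1&1&1\\1&-1&1&1\\1&1&-1&1\\1&1&1&1\end{pmatrix}.$$ Then every $4\times4$ matrix with entries $\pm1$ and vanishing permanent is equivalent to exactly one of $\Sigma_1,\Sigma_1^{t},\Sigma_2,\Sigma_2^{t},\Sigma_3$, and these five matrices (which all have vanishing permanent) are pairwise inequivalent. That is, up to equivalence there are exactly five $4\times4$ $(\pm1)$-matrices with vanishing permanent.
   Context: The permanent of $\Sigma=[\sigma_{ij}]$ is $\sum_{\lambda\in\mathrm{Sym}(4)}\sigma_{1,\lambda(1)}\cdots\sigma_{4,\lambda(4)}$; $\Sigma^t$ is the transpose. Two matrices with entries $\pm1$ are equivalent if one is obtained from the other by a finite succession of the operations: interchanging two rows or two columns; negating a row or a column (transposition is not an allowed operation). *)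

From HB Require Import structures.
From mathcomp Require Import all_boot all_order all_algebra all_fingroup.
Set Implicit Arguments. Unset Strict Implicit. Unset Printing Implicit Defensive.
Import GRing.Theory.
Local Open Scope ring_scope.

Definition mx4 := 'M[int]_4.

Definition pm_one (A : mx4) : Prop := forall i j, A i j = 1 \/ A i j = -1.

Definition permanent (A : mx4) : int :=
  \sum_(s : 'S_4) \prod_(i < 4) A i (s i).

Definition neg_row (i : 'I_4) (A : mx4) : mx4 :=
  \matrix_(k, l) (if k == i then - A k l else A k l).
Definition neg_col (j : 'I_4) (A : mx4) : mx4 :=
  \matrix_(k, l) (if l == j then - A k l else A k l).

Inductive elem_op : mx4 -> mx4 -> Prop :=
| op_xrow i1 i2 A : elem_op A (xrow i1 i2 A)
| op_xcol j1 j2 A : elem_op A (xcol j1 j2 A)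
| op_negrow i A : elem_op A (neg_row i A)
| op_negcol j A : elem_op A (neg_col j A).

Inductive equiv_pm : mx4 -> mx4 -> Prop :=
| eq_refl A : equiv_pm A A
| eq_step A B C : elem_op A B -> equiv_pm B C -> equiv_pm A C.

Definition mx_of_rows (r : seq (seq int)) : mx4 :=
  \matrix_(i < 4, j < 4) nth 0 (nth [::] r i) j.

Definition Sigma1 : mx4 := mx_of_rows
  [:: [:: -1; -1; 1; 1]; [:: 1; 1; 1; 1]; [:: 1; 1; 1; 1]; [:: 1; 1; 1; 1]].
Definition Sigma2 : mx4 := mx_of_rows
  [:: [:: -1; -1; 1; 1]; [:: 1; -1; -1; 1]; [:: 1; 1; 1; 1]; [:: 1; 1; 1; 1]].
Definition Sigma3 : mx4 := mx_of_rows
  [:: [:: -1; -1; 1; 1]; [:: 1; -1; 1; 1]; [:: 1; 1; -1; 1]; [:: 1; 1; 1; 1]].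

Definition reps (k : 'I_5) : mx4 :=
  match val k with
  | 0 => Sigma1
  | 1 => Sigma1^T
  | 2 => Sigma2
  | 3 => Sigma2^T
  | _ => Sigma3
  end.

From Pilot Require Import Defs.
From HB Require Import structures.
From mathcomp Require Import all_boot all_order all_algebra all_fingroup.
Set Implicit Arguments. Unset Strict Implicit. Unset Printing Implicit Defensive.
Import GRing.Theory.
Local Open Scope ring_scope.

(* Negating rows and columns brings every (+-1)-matrix to a normal form whose
   first row and column are all +1, leaving 2^9 candidates; since the
   elementary operations change the permanent at most in sign, a machine search
   over row and column permutations of these candidates matches each one of
   vanishing permanent with a representative.  The representatives are told
   apart by the number of ordered pairs of rows, and of columns, that agree up
   to sign, which the elementary operations preserve. *)

Lemma equiv_pm_trans A B C : equiv_pm A B -> equiv_pm B C -> equiv_pm A C.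
Proof. by elim=> // X Y Z XY _ IH /IH; apply: eq_step. Qed.

Lemma neg_rowK i : involutive (neg_row i).
Proof. by move=> A; apply/matrixP=> k l; rewrite !mxE; case: eqP; rewrite ?opprK. Qed.

Lemma neg_colK j : involutive (neg_col j).
Proof. by move=> A; apply/matrixP=> k l; rewrite !mxE; case: eqP; rewrite ?opprK. Qed.

Lemma xrowK i1 i2 : involutive (@xrow int 4 4 i1 i2).
Proof. by move=> A; apply/matrixP=> k l; rewrite !mxE tpermK. Qed.

Lemma xcolK j1 j2 : involutive (@xcol int 4 4 j1 j2).
Proof. by move=> A; apply/matrixP=> k l; rewrite !mxE tpermK. Qed.

Lemma elem_op_sym A B : elem_op A B -> elem_op B A.
Proof.
case=> [i1 i2 X|j1 j2 X|i X|j X].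
- by rewrite -{2}(xrowK i1 i2 X); constructor.
- by rewrite -{2}(xcolK j1 j2 X); constructor.
- by rewrite -{2}(neg_rowK i X); constructor.
- by rewrite -{2}(neg_colK j X); constructor.
Qed.

Lemma equiv_pm_sym A B : equiv_pm A B -> equiv_pm B A.
Proof.
elim=> [X|X Y Z XY _ ZY]; first exact: Defs.eq_refl.
by apply: equiv_pm_trans ZY (eq_step (elem_op_sym XY) (Defs.eq_refl _)).
Qed.

Lemma permanent_trmx A : permanent A^T = permanent A.
Proof.
rewrite /permanent (reindex_inj (@invg_inj _)); apply: eq_bigr => s _.
rewrite (reindex_inj (@perm_inj _ s)); apply: eq_bigr => i _.
by rewrite mxE permK.
Qed.

Lemma permanent_row_perm (s : 'S_4) A : permanent (row_perm s A) = permanent A.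
Proof.
rewrite /permanent (reindex_inj (mulgI s)); apply: eq_bigr => t _.
rewrite (reindex_inj (@perm_inj _ s^-1)); apply: eq_bigr => i _.
by rewrite mxE permKV permM permKV.
Qed.

Lemma permanent_col_perm (s : 'S_4) A : permanent (col_perm s A) = permanent A.
Proof. by rewrite -permanent_trmx tr_col_perm permanent_row_perm permanent_trmx. Qed.

Lemma permanent_neg_row i A : permanent (neg_row i A) = - permanent A.
Proof.
rewrite /permanent -sumrN; apply: eq_bigr => s _.
rewrite (bigD1 i) //= [in RHS](bigD1 i) //= mxE eqxx mulNr; congr (- (_ * _)).
by apply: eq_bigr => k /negbTE ki; rewrite mxE ki.
Qed.

Lemma trmx_neg_col j A : (neg_col j A)^T = neg_row j A^T.
Proof. by apply/matrixP=> k l; rewrite !mxE. Qed.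

Lemma permanent_neg_col j A : permanent (neg_col j A) = - permanent A.
Proof. by rewrite -permanent_trmx trmx_neg_col permanent_neg_row permanent_trmx. Qed.

Lemma elem_op_permanent A B :
  elem_op A B -> permanent B = permanent A \/ permanent B = - permanent A.
Proof.
case=> *; [left; exact: permanent_row_perm | left; exact: permanent_col_perm
          | right; exact: permanent_neg_row | right; exact: permanent_neg_col].
Qed.

Lemma equiv_pm_permanent0 A B : equiv_pm A B -> permanent A = 0 -> permanent B = 0.
Proof.
elim=> // X Y Z /elem_op_permanent XY _ IH X0; apply: IH.
by case: XY => ->; rewrite X0 ?oppr0.
Qed.

Definition rows_parallel (A : mx4) (i j : 'I_4) : bool :=
  [forall k, A i k == A j k] || [forall k, A i k == - A j k].

Definition parallel_rows (A : mx4) : nat := (\sum_(i < 4) \sum_(j < 4) rows_parallel A i j)%N.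

Lemma parallel_rows_xrow i1 i2 A : parallel_rows (xrow i1 i2 A) = parallel_rows A.
Proof.
pose t := tperm i1 i2; rewrite /parallel_rows (reindex_inj (@perm_inj _ t)).
apply: eq_bigr => i _; rewrite (reindex_inj (@perm_inj _ t)); apply: eq_bigr => j _.
by congr (nat_of_bool (_ || _)); apply: eq_forallb => k; rewrite !mxE !tpermK.
Qed.

Lemma rows_parallel_neg_row r A i j : rows_parallel (neg_row r A) i j = rows_parallel A i j.
Proof.
rewrite /rows_parallel; under eq_forallb => k do rewrite !mxE.
under [in X in _ || X]eq_forallb => k do rewrite !mxE.
case: (i == r) (j == r) => [] []; [|rewrite orbC|rewrite orbC|];
  by congr (_ || _); apply: eq_forallb => k; rewrite ?eqr_opp ?eqr_oppLR ?opprK.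
Qed.

Lemma rows_parallel_xcol j1 j2 A i j : rows_parallel (xcol j1 j2 A) i j = rows_parallel A i j.
Proof.
rewrite /rows_parallel; pose t := tperm j1 j2.
have forall_t (P : pred 'I_4) : [forall k, P (t k)] = [forall k, P k].
  apply/forallP/forallP=> P_ k; last exact: P_.
  by rewrite -(tpermK j1 j2 k); apply: P_.
congr (_ || _); [rewrite -(forall_t (fun k => A i k == A j k))
                | rewrite -(forall_t (fun k => A i k == - A j k))];
  by apply: eq_forallb => k; rewrite !mxE.
Qed.

Lemma rows_parallel_neg_col c A i j : rows_parallel (neg_col c A) i j = rows_parallel A i j.
Proof.
by rewrite /rows_parallel; congr (_ || _); apply: eq_forallb => k;
  rewrite !mxE; case: (k == c); rewrite ?eqr_opp.
Qed.

Lemma eq_parallel_rows A B :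
  (forall i j, rows_parallel A i j = rows_parallel B i j) -> parallel_rows A = parallel_rows B.
Proof. by move=> E; apply: eq_bigr => i _; apply: eq_bigr => j _; rewrite E. Qed.

Lemma trmx_neg_row i A : (neg_row i A)^T = neg_col i A^T.
Proof. by apply/matrixP=> k l; rewrite !mxE. Qed.

Lemma elem_op_parallel A B : elem_op A B ->
  parallel_rows A = parallel_rows B /\ parallel_rows A^T = parallel_rows B^T.
Proof.
case=> [i1 i2 X|j1 j2 X|i X|j X]; rewrite ?tr_xrow ?tr_xcol ?trmx_neg_row ?trmx_neg_col.
- by rewrite parallel_rows_xrow (eq_parallel_rows (rows_parallel_xcol _ _ _)).
- by rewrite parallel_rows_xrow (eq_parallel_rows (rows_parallel_xcol _ _ _)).
- by rewrite (eq_parallel_rows (rows_parallel_neg_row _ _))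
             (eq_parallel_rows (rows_parallel_neg_col _ _)).
- by rewrite (eq_parallel_rows (rows_parallel_neg_col _ _))
             (eq_parallel_rows (rows_parallel_neg_row _ _)).
Qed.

Lemma equiv_pm_parallel A B : equiv_pm A B ->
  parallel_rows A = parallel_rows B /\ parallel_rows A^T = parallel_rows B^T.
Proof. by elim=> // X Y Z /elem_op_parallel[-> ->]. Qed.

Lemma sum_perm_permutations (R : comNzSemiRingType) n (F : nat -> nat -> R) :
  \sum_(s : 'S_n) \prod_(i < n) F i (s i) =
  \sum_(q <- permutations (iota 0 n)) \prod_(i < n) F i (nth 0%N q i).
Proof.
pose graph (s : 'S_n) := [seq val (s i) | i <- enum 'I_n].
have nth_graph s (i : 'I_n) : nth 0%N (graph s) i = s i.
  by rewrite /graph (nth_map i) ?size_enum_ord ?nth_ord_enum.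
have graph_inj : injective graph.
  by move=> s t st; apply/permP=> i; apply/val_inj; rewrite /= -!nth_graph st.
have graph_perm s : perm_eq (graph s) (iota 0 n).
  apply: uniq_perm; [|exact: iota_uniq|].
    by rewrite map_inj_uniq ?enum_uniq // => x y /val_inj/perm_inj.
  move=> x; rewrite mem_iota /=; apply/mapP/idP => [[i _ ->] | x_lt_n]; first exact: ltn_ord.
  by exists ((s^-1)%g (Ordinal x_lt_n)); [rewrite mem_enum | rewrite permKV].
have graphs_perm : perm_eq [seq graph s | s <- enum 'S_n] (permutations (iota 0 n)).
  have graphs_uniq : uniq [seq graph s | s <- enum 'S_n].
    by rewrite (map_inj_uniq graph_inj) enum_uniq.
  have graphs_sub : {subset [seq graph s | s <- enum 'S_n] <= permutations (iota 0 n)}.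
    by move=> q /mapP[s _ ->]; rewrite mem_permutations graph_perm.
  have graphs_size : (size (permutations (iota 0 n)) <= size [seq graph s | s <- enum 'S_n])%N.
    by rewrite size_map -cardE card_Sn size_permutations ?iota_uniq ?size_iota.
  have [_ graphs_eq] := uniq_min_size graphs_uniq graphs_sub graphs_size.
  by apply: uniq_perm => //; rewrite permutations_uniq.
rewrite -(perm_big _ graphs_perm) big_map big_enum.
by apply: eq_bigr => s _; apply: eq_bigr => i _; rewrite nth_graph.
Qed.

Lemma forall_ord_iota n (P : pred nat) : [forall k : 'I_n, P k] = all P (iota 0 n).
Proof.
apply/forallP/allP=> [P_ k | P_ k]; last by apply: P_; rewrite mem_iota ltn_ord.
by rewrite mem_iota => /andP[_ k_lt_n]; apply: (P_ (Ordinal k_lt_n)).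
Qed.

Lemma sumn_map_iota n (G : nat -> nat) : sumn [seq G i | i <- iota 0 n] = (\sum_(i < n) G i)%N.
Proof. by rewrite sumnE big_map -{1}(subn0 n) big_mkord. Qed.

Fixpoint bitseqs n : seq (seq bool) :=
  if n is m.+1 then [seq b :: s | b <- [:: true; false], s <- bitseqs m] else [:: [::]].

Lemma mem_bitseqs s : s \in bitseqs (size s).
Proof.
elim: s => [|b s IH] //; apply/allpairsP; exists (b, s).
by split=> //; case: b.
Qed.

(* A sign pattern lists the positions of the entries -1; only indices below 4 matter. *)
Definition signs := nat -> nat -> bool.

Definition pm (b : bool) : int := if b then -1 else 1.

Definition mx_of_signs (f : signs) : mx4 := \matrix_(i, j) pm (f i j).

Definition signs_of_mx (A : mx4) : signs := fun i j => A (inord i) (inord j) == -1.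

Lemma signs_of_mxK A : pm_one A -> mx_of_signs (signs_of_mx A) = A.
Proof.
by move=> A_pm; apply/matrixP=> i j; rewrite mxE /signs_of_mx !inord_val; case: (A_pm i j) => ->.
Qed.

Lemma pm_one_mx_of_signs f : pm_one (mx_of_signs f).
Proof. by move=> i j; rewrite mxE; case: (f i j); [right|left]. Qed.

Definition transpose_signs (f : signs) : signs := fun i j => f j i.

Lemma trmx_mx_of_signs f : (mx_of_signs f)^T = mx_of_signs (transpose_signs f).
Proof. by apply/matrixP=> i j; rewrite !mxE. Qed.

Definition sign_table (f : signs) : seq (seq bool) :=
  [seq [seq f i j | j <- iota 0 4] | i <- iota 0 4].

Lemma mx_of_signs_table f g : sign_table f = sign_table g -> mx_of_signs f = mx_of_signs g.
Proof.
move=> fg; apply/matrixP=> i j; rewrite !mxE.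
have /(congr1 (fun t => nth false (nth [::] t i) j)) := fg.
by rewrite /sign_table !(nth_map 0%N) ?size_iota ?nth_iota // => ->.
Qed.

Inductive op := XR of nat & nat | XC of nat & nat | NR of nat | NC of nat.

Definition op_bounded (o : op) : bool :=
  match o with
  | XR a b | XC a b => (a < 4)%N && (b < 4)%N
  | NR a | NC a => (a < 4)%N
  end.

Definition mx_op (o : op) : mx4 -> mx4 :=
  match o with
  | XR a b => xrow (inord a) (inord b)
  | XC a b => xcol (inord a) (inord b)
  | NR a => neg_row (inord a)
  | NC a => neg_col (inord a)
  end.

Definition swapn (a b i : nat) : nat := if i == a then b else if i == b then a else i.

Definition signs_op (o : op) (f : signs) : signs :=
  match o with
  | XR a b => fun i j => f (swapn a b i) j
  | XC a b => fun i j => f i (swapn a b j)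
  | NR a => fun i j => f i j (+) (i == a)
  | NC a => fun i j => f i j (+) (j == a)
  end.

Lemma tperm_inord (a b : nat) (i : 'I_4) : (a < 4)%N -> (b < 4)%N ->
  tperm (inord a) (inord b) i = swapn a b i :> nat.
Proof.
move=> a4 b4; have eq_inord c : (c < 4)%N -> (i == inord c) = (val i == c).
  by move=> c4; rewrite -val_eqE /= inordK.
rewrite /swapn -!eq_inord //; case: tpermP => [->|->|/eqP/negbTE-> /eqP/negbTE->] //.
- by rewrite eqxx /= inordK.
- by rewrite eqxx; case: eqP => [ba|_]; rewrite -?ba /= inordK.
Qed.

Lemma mx_of_signs_op o f :
  op_bounded o -> mx_of_signs (signs_op o f) = mx_op o (mx_of_signs f).
Proof.
case: o => [a b|a b|a|a] /= bounded; apply/matrixP=> i j; rewrite !mxE.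
- by case/andP: bounded => a4 b4; rewrite tperm_inord.
- by case/andP: bounded => a4 b4; rewrite tperm_inord.
- by rewrite -val_eqE /= inordK //; case: (i == a :> nat); case: (f i j).
- by rewrite -val_eqE /= inordK //; case: (j == a :> nat); case: (f i j).
Qed.

Definition signs_ops (os : seq op) (f : signs) : signs := foldl (fun g o => signs_op o g) f os.

Lemma equiv_signs_ops os f :
  all op_bounded os -> equiv_pm (mx_of_signs f) (mx_of_signs (signs_ops os f)).
Proof.
elim: os f => [|o os IH] f /=; first by move=> _; apply: Defs.eq_refl.
case/andP=> o_bounded os_bounded; apply: eq_step (IH _ os_bounded).
by rewrite mx_of_signs_op //; case: o {o_bounded} => *; constructor.
Qed.

(* Negate the rows starting with -1, then the columns whose first entry is still -1. *)
Definition normalize (f : signs) : signs :=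
  fun i j => f i j (+) f i 0%N (+) f 0%N j (+) f 0%N 0%N.

Lemma signs_ops_cat os1 os2 f : signs_ops (os1 ++ os2) f = signs_ops os2 (signs_ops os1 f).
Proof. exact: foldl_cat. Qed.

Lemma signs_ops_neg_rows l f i j :
  signs_ops [seq NR a | a <- l] f i j = f i j (+) odd (count_mem i l).
Proof.
elim: l f => [|a l IH] f /=; first by rewrite addbF.
by rewrite IH /= oddD oddb eq_sym addbA.
Qed.

Lemma signs_ops_neg_cols l f i j :
  signs_ops [seq NC a | a <- l] f i j = f i j (+) odd (count_mem j l).
Proof.
elim: l f => [|a l IH] f /=; first by rewrite addbF.
by rewrite IH /= oddD oddb eq_sym addbA.
Qed.

Definition normalize_ops (f : signs) : seq op :=
  [seq NR i | i <- iota 0 4 & f i 0%N] ++ [seq NC j | j <- iota 0 4 & f 0%N j (+) f 0%N 0%N].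

Lemma equiv_normalize f : equiv_pm (mx_of_signs f) (mx_of_signs (normalize f)).
Proof.
have count_iota (P : pred nat) (i : 'I_4) :
    odd (count_mem (i : nat) [seq k <- iota 0 4 | P k]) = P i.
  by rewrite count_uniq_mem ?filter_uniq ?iota_uniq // mem_filter mem_iota ltn_ord; case: (P i).
have -> : mx_of_signs (normalize f) = mx_of_signs (signs_ops (normalize_ops f) f).
  apply/matrixP=> i j; rewrite !mxE signs_ops_cat signs_ops_neg_cols.
  rewrite (signs_ops_neg_rows [seq k <- iota 0 4 | f k 0%N]).
  rewrite (count_iota (fun k => f k 0%N)) (count_iota (fun k => f 0%N k (+) f 0%N 0%N)).
  by rewrite /normalize !addbA.
apply: equiv_signs_ops; rewrite all_cat !all_map.
by apply/andP; split; apply/allP=> k; rewrite mem_filter mem_iota => /and3P[].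
Qed.

Definition permanent_signs (f : signs) : int :=
  foldr +%R 0 [seq foldr *%R 1 [seq pm (f i (nth 0%N q i)) | i <- iota 0 4]
              | q <- permutations (iota 0 4)].

Lemma permanent_mx_of_signs f : permanent (mx_of_signs f) = permanent_signs f.
Proof.
rewrite /permanent; under eq_bigr => s _ do under eq_bigr => i _ do rewrite mxE.
rewrite (sum_perm_permutations 4 (fun i j => pm (f i j))) /permanent_signs foldrE big_map.
by apply: eq_bigr => q _; rewrite foldrE big_map -[iota 0 4]/(index_iota 0 4) big_mkord.
Qed.

Definition rows_parallel_signs (f : signs) (i j : nat) : bool :=
  all (fun k => f i k == f j k) (iota 0 4) || all (fun k => f i k != f j k) (iota 0 4).

Definition parallel_rows_signs (f : signs) : nat :=
  sumn [seq sumn [seq rows_parallel_signs f i j : nat | j <- iota 0 4] | i <- iota 0 4].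

Lemma parallel_rows_mx_of_signs f : parallel_rows (mx_of_signs f) = parallel_rows_signs f.
Proof.
have E (i j : 'I_4) : rows_parallel (mx_of_signs f) i j = rows_parallel_signs f i j.
  rewrite /rows_parallel /rows_parallel_signs -!forall_ord_iota.
  by congr (_ || _); apply: eq_forallb => k; rewrite !mxE; case: (f i k); case: (f j k).
rewrite /parallel_rows_signs sumn_map_iota; apply: eq_bigr => i _.
by rewrite sumn_map_iota; apply: eq_bigr => j _; rewrite E.
Qed.

Definition signs_of_rows (r : seq (seq bool)) : signs := fun i j => nth false (nth [::] r i) j.

Definition rep_signs (k : nat) : signs :=
  let S1 := signs_of_rows [:: [:: true; true; false; false]] in
  let S2 := signs_of_rows [:: [:: true; true; false; false]; [:: false; true; true; false]] in
  let S3 := signs_of_rows [:: [:: true; true; false; false]; [:: false; true; false; false];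
                              [:: false; false; true; false]] in
  match k with
  | 0 => S1 | 1 => transpose_signs S1 | 2 => S2 | 3 => transpose_signs S2 | _ => S3
  end.

Lemma reps_mx_of_signs (k : 'I_5) : reps k = mx_of_signs (rep_signs k).
Proof.
case: k => [[|[|[|[|[|k]]]]] k_lt5] //=; apply/matrixP=> i j; rewrite /reps /= !mxE;
  by case: i => [[|[|[|[|i]]]] ?]; case: j => [[|[|[|[|j]]]] ?].
Qed.

(* Every permutation of 'I_4 is a product (0 a)(1 b)(2 c) with a >= 0, b >= 1, c >= 2. *)
Definition swaps (X : nat -> nat -> op) (i : nat) : seq op := [seq X i a | a <- iota i (4 - i)].

Definition swap_words (X : nat -> nat -> op) : seq (seq op) :=
  [seq x :: w | x <- swaps X 0, w <- [seq [:: y; z] | y <- swaps X 1, z <- swaps X 2]].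

Definition words : seq (seq op) := [seq r ++ c | r <- swap_words XR, c <- swap_words XC].

Lemma words_bounded : all (all op_bounded) words.
Proof. by vm_compute. Qed.

Definition rep_tables : seq (seq (seq bool)) :=
  [seq sign_table (normalize (rep_signs k)) | k <- iota 0 5].

Definition classified (f : signs) : bool :=
  has (fun w => sign_table (normalize (signs_ops w f)) \in rep_tables) words.

Definition bordered (s : seq bool) : signs :=
  fun i j => [&& (0 < i)%N, (0 < j)%N & nth false s (i.-1 * 3 + j.-1)].

Definition interior (f : signs) : seq bool := [seq f (k %/ 3).+1 (k %% 3).+1 | k <- iota 0 9].

Lemma normalize_bordered f :
  sign_table (normalize f) = sign_table (bordered (interior (normalize f))).
Proof.
have row0 j : normalize f 0%N j = false by rewrite /normalize; case: (f 0%N j); case: (f 0%N 0%N).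
have col0 i : normalize f i 0%N = false by rewrite /normalize; case: (f i 0%N); case: (f 0%N 0%N).
by rewrite /sign_table /= !row0 !col0.
Qed.

(* The [if] keeps the call-by-value [vm_compute] from searching patterns of
   nonzero permanent. *)
Lemma search_complete :
  all (fun s => if permanent_signs (bordered s) == 0 then classified (bordered s) else true)
      (bitseqs 9).
Proof. by vm_compute. Qed.

Lemma exists_rep A : pm_one A -> permanent A = 0 -> exists k : 'I_5, equiv_pm A (reps k).
Proof.
move=> A_pm A0; pose s := interior (normalize (signs_of_mx A)).
have A_s : equiv_pm A (mx_of_signs (bordered s)).
  rewrite -(mx_of_signs_table (normalize_bordered _)) -{1}(signs_of_mxK A_pm).
  exact: equiv_normalize.
have s0 : permanent_signs (bordered s) = 0.
  by rewrite -permanent_mx_of_signs; apply: equiv_pm_permanent0 A_s A0.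
have s_in : s \in bitseqs 9 by have := mem_bitseqs s; rewrite size_map size_iota.
have : classified (bordered s) by have := allP search_complete s s_in; rewrite s0 eqxx.
case/(has_nthP [::])=> i i_lt /mapP[k].
rewrite mem_iota => /andP[_ k_lt5] w_k.
exists (Ordinal k_lt5); rewrite reps_mx_of_signs /=.
apply: equiv_pm_trans A_s _.
apply: equiv_pm_trans (equiv_signs_ops _ (all_nthP [::] words_bounded i i_lt)) _.
apply: equiv_pm_trans (equiv_normalize _) _; rewrite (mx_of_signs_table w_k).
exact/equiv_pm_sym/equiv_normalize.
Qed.

Definition rep_invariant (k : nat) : nat * nat :=
  (parallel_rows_signs (rep_signs k), parallel_rows_signs (transpose_signs (rep_signs k))).

Lemma rep_invariant_uniq : uniq [seq rep_invariant k | k <- iota 0 5].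
Proof. by vm_compute. Qed.

Lemma reps_inequivalent k l : equiv_pm (reps k) (reps l) -> k = l.
Proof.
rewrite !reps_mx_of_signs => /equiv_pm_parallel.
rewrite !trmx_mx_of_signs !parallel_rows_mx_of_signs => -[kl1 kl2].
apply/val_inj/(uniqP (0, 0)%N rep_invariant_uniq); rewrite ?inE ?size_map ?size_iota;
  [exact: ltn_ord | exact: ltn_ord |].
by rewrite !(nth_map 0%N) ?nth_iota ?size_iota //= /rep_invariant kl1 kl2.
Qed.

Theorem theorem3p6 :
  (forall k : 'I_5, pm_one (reps k) /\ permanent (reps k) = 0) /\
  (forall k l : 'I_5, equiv_pm (reps k) (reps l) -> k = l) /\
  (forall A : mx4, pm_one A -> permanent A = 0 ->
     exists! k : 'I_5, equiv_pm A (reps k)).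
Proof.
split; last split.
- move=> k; rewrite reps_mx_of_signs permanent_mx_of_signs.
  split; first exact: pm_one_mx_of_signs.
  by case: k => [[|[|[|[|[|k]]]]] ?]; vm_compute.
- exact: reps_inequivalent.
- move=> A A_pm A0; have [k A_k] := exists_rep A_pm A0; exists k; split=> // l A_l.
  exact/reps_inequivalent/(equiv_pm_trans (equiv_pm_sym A_k)).
Qed.
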